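(* Let $X,Y$ be finite nonempty sets, $\alpha>0$, and let $A\in\mathbb{R}^{X\times Y}$ satisfy $\operatorname{Ldim}_\alpha(A)=d$, $\|A\|_{\gamma_2}=\gamma$ and $\max_{x,y}|A(x,y)|=M$. Then $$\gamma\ge\frac{\alpha\sqrt d}{2(M+1)}-1 .$$ Consequently (since $M\le\gamma$), $d\le 4(\gamma+1)^4/\alpha^2$; in particular $d=O_\alpha(\gamma^4)$.
   Context: The $\gamma_2$ factorization norm of a matrix $A$ is $\|A\|_{\gamma_2}=\min_{UV=A}\|U\|_{\mathrm{row}}\|V\|_{\mathrm{col}}$, where the minimum is over all factorizations $A=UV$, $\|U\|_{\mathrm{row}}$ is the largest Euclidean norm of a row of $U$ and $\|V\|_{\mathrm{col}}$ the largest Euclidean norm of a column of $V$. A weighted mistake tree of depth $d$ over $X$ is a complete binary tree of depth $d$ in which each internal node $\nu$ is labelled by $x(\nu)\in X$ and a real number $w(\nu)$, with a designated left and right child. $A$ $\alpha$-shatters it if for every root-to-leaf path $(\nu_1,\dots,\nu_{d+1})$ there is $y\in Y$ such that for all $1\le i\le d$: $A(x(\nu_i),y)\ge w(\nu_i)+\alpha/2$ if $\nu_{i+1}$ is the left child of $\nu_i$, and $A(x(\nu_i),y)\le w(\nu_i)-\alpha/2$ if $\nu_{i+1}$ is the right child. $\operatorname{Ldim}_\alpha(A)$ is the largest $d$ such that some weighted mistake tree of depth $d$ is $\alpha$-shattered by $A$. *)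

From HB Require Import structures.
From mathcomp Require Import all_boot all_order all_algebra.
From mathcomp Require Import classical_sets reals.
Set Implicit Arguments. Unset Strict Implicit. Unset Printing Implicit Defensive.
Import Order.TTheory GRing.Theory Num.Theory.
Local Open Scope ring_scope.
Local Open Scope classical_set_scope.

Section Defs.
Variables (R : realType) (X Y : finType).

Definition row_norm (k : nat) (U : X -> 'I_k -> R) : R :=
  \big[Num.max/0]_(x : X) Num.sqrt (\sum_(i < k) U x i ^+ 2).

Definition col_norm (k : nat) (V : 'I_k -> Y -> R) : R :=
  \big[Num.max/0]_(y : Y) Num.sqrt (\sum_(i < k) V i y ^+ 2).

Definition factorizes (A : X -> Y -> R) (k : nat)
  (U : X -> 'I_k -> R) (V : 'I_k -> Y -> R) : Prop :=
  forall x y, A x y = \sum_(i < k) U x i * V i y.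
Arguments factorizes : clear implicits.

Definition gamma2 (A : X -> Y -> R) : R :=
  inf [set r : R | exists k (U : X -> 'I_k -> R) (V : 'I_k -> Y -> R),
         factorizes A k U V /\ r = row_norm U * col_norm V].

Definition max_abs (A : X -> Y -> R) : R :=
  \big[Num.max/0]_(x : X) \big[Num.max/0]_(y : Y) `|A x y|.

(* A weighted mistake tree of depth d: internal nodes are bit strings
   of length < d (true = go to the left child); node v is labelled by
   xl v : X and wl v : R.  A root-to-leaf path is a d-tuple of bits b,
   visiting the nodes take i b (i < d). *)
Definition shatters (A : X -> Y -> R) (alpha : R) (d : nat)
  (xl : seq bool -> X) (wl : seq bool -> R) : Prop :=
  forall b : d.-tuple bool, exists y : Y, forall i : 'I_d,
    let v := take i b in
    if tnth b i then wl v + alpha / 2 <= A (xl v) y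
    else A (xl v) y <= wl v - alpha / 2.

Definition shattered_at_depth (A : X -> Y -> R) (alpha : R) (d : nat) : Prop :=
  exists (xl : seq bool -> X) (wl : seq bool -> R), shatters A alpha d xl wl.

Definition Ldim_is (A : X -> Y -> R) (alpha : R) (d : nat) : Prop :=
  shattered_at_depth A alpha d /\
  forall d', shattered_at_depth A alpha d' -> (d' <= d)%N.

End Defs.

From mathcomp Require Import all_boot all_order all_algebra.
From mathcomp Require Import classical_sets reals.
From mathcomp Require Import ring lra.
Set Implicit Arguments. Unset Strict Implicit. Unset Printing Implicit Defensive.
Import Order.TTheory GRing.Theory Num.Theory.
Local Open Scope ring_scope.

(* Fix a factorization A = U V with row and column norms r and c, and embed a
   tree node s and a column y as u_s = (t U(x_s), -w_s), v_y = (V(., y) / t, 1),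
   so that A(x_s, y) - w_s = <u_s, v_y>.  Walk down the tree like a perceptron
   that is always wrong: at node s go to the child whose sign b makes
   b <u_s, P> <= 0, where P is the signed sum of the features met so far.  Then
   |P|^2 grows by at most |u_s|^2 <= t^2 r^2 + M^2 per step (|w_s| <= M as both
   children of s are realized), while the column y
   shattering the leaf reached gives d alpha / 2 <= <P, v_y> <= |P| |v_y|.  With
   t^2 = c / r this yields d alpha^2 <= 4 (rc + M^2)(rc + 1) <= 4 (M+1)^2 (rc+1)^2. *)

Lemma sumr_option (V : nmodType) (I : finType) (F : option I -> V) :
  \sum_(o : option I) F o = F None + \sum_i F (Some i).
Proof. by rewrite ![index_enum _]unlock [@Finite.enum in LHS]unlock /= big_cons big_map. Qed.

Section Dot.
Variables (R : realFieldType) (I : finType).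
Implicit Types u v : I -> R.

Definition dot u v : R := \sum_i u i * v i.

Lemma dotuu u : dot u u = \sum_i u i ^+ 2.
Proof. by apply: eq_bigr => i _; rewrite expr2. Qed.

Lemma dot_ge0 u : 0 <= dot u u.
Proof. by rewrite dotuu; apply: sumr_ge0 => i _; apply: sqr_ge0. Qed.

Lemma dot_CauchySchwarz u v : dot u v ^+ 2 <= dot u u * dot v v.
Proof.
have lagrange : \sum_i \sum_j (u i * v j - u j * v i) ^+ 2 =
    2 * (dot u u * dot v v - dot u v ^+ 2).
  have -> : \sum_i \sum_j (u i * v j - u j * v i) ^+ 2 =
      \sum_i \sum_j (u i * u i * (v j * v j)) + \sum_i \sum_j (v i * v i * (u j * u j))
      - 2 * \sum_i \sum_j (u i * v i * (u j * v j)).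
    rewrite mulr_sumr -sumrN -!big_split /=.
    apply: eq_bigr => i _; rewrite mulr_sumr -sumrN -!big_split /=.
    by apply: eq_bigr => j _; ring.
  by rewrite /dot expr2 -!big_distrlr /=; ring.
rewrite -subr_ge0 -(pmulr_rge0 _ (ltr0Sn R 1)) -lagrange.
by apply: sumr_ge0 => i _; apply: sumr_ge0 => j _; apply: sqr_ge0.
Qed.
End Dot.

Definition bit_sign {R : pzRingType} (b : bool) : R := if b then 1 else -1.

Lemma bit_sign_sqr (R : pzRingType) b : bit_sign b ^+ 2 = 1 :> R.
Proof. by case: b; rewrite /bit_sign ?sqrrN expr1n. Qed.

Section GreedyPath.
Variables (R : realFieldType) (I : finType) (feat : seq bool -> I -> R).

Definition drift (s : seq bool) (i : I) : R :=
  \sum_(j < size s) bit_sign (nth false s j) * feat (take j s) i.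

Fixpoint greedy_path (n : nat) : seq bool :=
  if n is n'.+1 then
    let s := greedy_path n' in rcons s (dot (drift s) (feat s) <= 0)
  else [::].

Lemma size_greedy_path n : size (greedy_path n) = n.
Proof. by elim: n => //= n IHn; rewrite size_rcons IHn. Qed.

Lemma drift_rcons s b i : drift (rcons s b) i = drift s i + bit_sign b * feat s i.
Proof.
rewrite /drift size_rcons big_ord_recr /= nth_rcons ltnn eqxx -cats1 take_size_cat //.
congr (_ + _); apply: eq_bigr => j _.
by rewrite nth_cat ltn_ord takel_cat // ltnW.
Qed.

Lemma dot_drift s v :
  dot (drift s) v = \sum_(j < size s) bit_sign (nth false s j) * dot (feat (take j s)) v.
Proof.
rewrite /dot; under eq_bigr do rewrite /drift mulr_suml.
rewrite exchange_big /=; apply: eq_bigr => j _.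
by rewrite mulr_sumr; apply: eq_bigr => i _; rewrite mulrA.
Qed.

Lemma dot_greedy_drift_le n B :
  (forall s, (size s < n)%N -> dot (feat s) (feat s) <= B) ->
  dot (drift (greedy_path n)) (drift (greedy_path n)) <= n%:R * B.
Proof.
elim: n => [|n IHn] featB.
  by rewrite mul0r /dot big1 // => i _; rewrite /drift big_ord0 mul0r.
set s := greedy_path n; set b := dot (drift s) (feat s) <= 0.
have cross : bit_sign b * dot (drift s) (feat s) <= 0.
  by rewrite /b /bit_sign; case: ifPn; rewrite ?mul1r // -ltNge mulN1r oppr_le0 => /ltW.
have expand : dot (drift (rcons s b)) (drift (rcons s b)) = dot (drift s) (drift s)
    + 2 * (bit_sign b * dot (drift s) (feat s)) + bit_sign b ^+ 2 * dot (feat s) (feat s).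
  rewrite /dot !mulr_sumr -!big_split /=; apply: eq_bigr => i _.
  by rewrite !drift_rcons; ring.
have IH := IHn (fun s' lt_s'n => featB s' (ltnW lt_s'n)).
have feat_s : dot (feat s) (feat s) <= B by apply: featB; rewrite size_greedy_path.
have -> : greedy_path n.+1 = rcons s b by [].
rewrite expand bit_sign_sqr mul1r -nat1r; lra.
Qed.

Lemma greedy_path_margin_le n (v : I -> R) (m B C : R) :
  0 <= m -> 0 <= B -> (forall s, (size s < n)%N -> dot (feat s) (feat s) <= B) ->
  dot v v <= C ->
  (forall j : 'I_n, m <= bit_sign (nth false (greedy_path n) j) *
                          dot (feat (take j (greedy_path n))) v) ->
  n%:R * m ^+ 2 <= B * C.
Proof.
move=> m_ge0 B_ge0 featB vC margin; set b := greedy_path n.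
have drift_ge : n%:R * m <= dot (drift b) v.
  rewrite dot_drift size_greedy_path mulr_natl -[in X in X <= _](card_ord n) -sumr_const.
  exact: ler_sum.
have sqr_le : (n%:R * m) ^+ 2 <= n%:R * B * C.
  apply: (le_trans (_ : _ <= dot (drift b) v ^+ 2)).
    by rewrite ler_sqr ?nnegrE ?mulr_ge0 // (le_trans _ drift_ge) ?mulr_ge0.
  apply: (le_trans (dot_CauchySchwarz _ _)).
  exact: ler_pM (dot_ge0 _) (dot_ge0 _) (dot_greedy_drift_le featB) vC.
have [->|n_gt0] := posnP n; first by rewrite mul0r mulr_ge0 // (le_trans (dot_ge0 v)).
have N_gt0 : 0 < n%:R :> R by rewrite ltr0n.
by rewrite -(ler_pM2l N_gt0); move: sqr_le; rewrite exprMn expr2; lra.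
Qed.

End GreedyPath.

Section Shattering.
Variables (R : realType) (X Y : finType) (A : X -> Y -> R) (alpha : R) (d : nat).
Variables (xl : seq bool -> X) (wl : seq bool -> R).
Hypothesis shA : shatters A alpha d xl wl.

Lemma shatters_child s (c : bool) : (size s < d)%N ->
  exists y, if c then wl s + alpha / 2 <= A (xl s) y
            else A (xl s) y <= wl s - alpha / 2.
Proof.
move=> lt_sd; pose b := [tuple nth c s j | j < d].
have [y shy] := shA b; exists y; have := shy (Ordinal lt_sd).
have -> : tnth b (Ordinal lt_sd) = c by rewrite tnth_mktuple nth_default.
suff -> : take (Ordinal lt_sd) b = s by [].
have le_sd : (size s <= size b)%N by rewrite size_tuple ltnW.
apply: (@eq_from_nth _ false) => [|j]; rewrite size_takel //.
move=> lt_js; rewrite nth_take // (nth_mktuple _ _ (Ordinal (ltn_trans lt_js lt_sd))).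
exact: set_nth_default.
Qed.

Lemma shatters_threshold (M : R) s : (forall x y, `|A x y| <= M) -> (size s < d)%N ->
  `|wl s| + alpha / 2 <= M.
Proof.
move=> AM lt_sd.
have [y1 left] := shatters_child true lt_sd.
have [y2 right] := shatters_child false lt_sd.
move: (AM (xl s) y1) (AM (xl s) y2) left right.
rewrite !ler_norml => /andP[? ?] /andP[? ?] ? ?.
by case: (lerP 0 (wl s)) => [/ger0_norm|/ltr0_norm] ->; lra.
Qed.

Lemma shatters_margin (b : d.-tuple bool) : exists y, forall i : 'I_d,
  alpha / 2 <= bit_sign (tnth b i) * (A (xl (take i b)) y - wl (take i b)).
Proof.
have [y shy] := shA b; exists y => i; move: (shy i).
by rewrite /bit_sign; case: (tnth b i); lra.
Qed.

End Shattering.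

Section Factorization.
Variables (R : realType) (X Y : finType).

Lemma row_norm_ge0 k (U : X -> 'I_k -> R) : 0 <= row_norm U.
Proof. exact: bigmax_ge_id. Qed.

Lemma col_norm_ge0 k (V : 'I_k -> Y -> R) : 0 <= col_norm V.
Proof. exact: bigmax_ge_id. Qed.

Lemma dot_le_sqr_bigmax (I T : finType) (u : T -> I -> R) t :
  dot (u t) (u t) <= (\big[Num.max/0]_t' Num.sqrt (\sum_i u t' i ^+ 2)) ^+ 2.
Proof.
rewrite -[leLHS]sqr_sqrtr ?dot_ge0 // ler_sqr ?nnegrE ?sqrtr_ge0 ?bigmax_ge_id //.
by rewrite dotuu; exact: (le_bigmax _ (fun t' => Num.sqrt (\sum_i u t' i ^+ 2))).
Qed.

Lemma dot_row_le k (U : X -> 'I_k -> R) x : dot (U x) (U x) <= row_norm U ^+ 2.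
Proof. exact: dot_le_sqr_bigmax. Qed.

Lemma dot_col_le k (V : 'I_k -> Y -> R) y : dot (V^~ y) (V^~ y) <= col_norm V ^+ 2.
Proof. exact: (dot_le_sqr_bigmax (fun y i => V i y)). Qed.

Lemma factorizes_abs_le (A : X -> Y -> R) k (U : X -> 'I_k -> R) V x y : factorizes A U V ->
  `|A x y| <= row_norm U * col_norm V.
Proof.
move=> AUV; have -> : A x y = dot (U x) (V^~ y) by rewrite AUV.
rewrite -ler_sqr ?nnegrE ?mulr_ge0 ?row_norm_ge0 ?col_norm_ge0 // real_normK ?num_real //.
apply: (le_trans (dot_CauchySchwarz _ _)); rewrite exprMn.
by apply: ler_pM; rewrite ?dot_ge0 ?dot_row_le ?dot_col_le.
Qed.

Lemma abs_le_max_abs (A : X -> Y -> R) x y : `|A x y| <= max_abs A.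
Proof.
apply: le_trans (le_bigmax _ _ x).
exact: (le_bigmax _ (fun y => `|A x y|) y).
Qed.

Lemma max_abs_le_factorization (A : X -> Y -> R) k (U : X -> 'I_k -> R) V : factorizes A U V ->
  max_abs A <= row_norm U * col_norm V.
Proof.
move=> AUV; apply: bigmax_le => [|x _]; first by rewrite mulr_ge0 ?row_norm_ge0 ?col_norm_ge0.
by apply: bigmax_le => [|y _]; rewrite ?mulr_ge0 ?row_norm_ge0 ?col_norm_ge0 ?factorizes_abs_le.
Qed.

Lemma factorizes_trivial (A : X -> Y -> R) :
  factorizes A (k := #|Y|) (fun x i => A x (enum_val i)) (fun i y => (i == enum_rank y)%:R).
Proof.
move=> x y; rewrite (bigD1 (enum_rank y)) //= eqxx mulr1 enum_rankK big1 ?addr0 //.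
by move=> i /negbTE ->; rewrite mulr0.
Qed.

End Factorization.

Section NodeFeatures.
Variables (R : realType) (X Y : finType) (k : nat).
Variables (U : X -> 'I_k -> R) (V : 'I_k -> Y -> R).
Variables (xl : seq bool -> X) (wl : seq bool -> R) (t : R).

Definition node_feature s (o : option 'I_k) : R :=
  if o is Some i then t * U (xl s) i else - wl s.

Definition col_feature y (o : option 'I_k) : R :=
  if o is Some i then V i y / t else 1.

Lemma dot_node_col_feature (A : X -> Y -> R) s y : factorizes A U V -> t != 0 ->
  dot (node_feature s) (col_feature y) = A (xl s) y - wl s.
Proof.
move=> AUV t_neq0; rewrite /dot sumr_option /= mulr1 addrC AUV.
by congr (_ - _); apply: eq_bigr => i _; field.
Qed.

Lemma dot_node_feature s :
  dot (node_feature s) (node_feature s) = t ^+ 2 * dot (U (xl s)) (U (xl s)) + wl s ^+ 2.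
Proof.
rewrite !dotuu sumr_option /= sqrrN addrC mulr_sumr.
by congr (_ + _); apply: eq_bigr => i _; rewrite exprMn.
Qed.

Lemma dot_col_feature y :
  dot (col_feature y) (col_feature y) = t ^- 2 * dot (V^~ y) (V^~ y) + 1.
Proof.
rewrite !dotuu sumr_option /= expr1n addrC mulr_sumr.
by congr (_ + _); apply: eq_bigr => i _; rewrite exprMn exprVn mulrC.
Qed.

End NodeFeatures.

Lemma shattered_depth_le (R : realType) (X Y : finType) (A : X -> Y -> R) (alpha : R) d
    xl wl k (U : X -> 'I_k -> R) V (M : R) :
  0 < alpha -> factorizes A U V -> shatters A alpha d xl wl ->
  (forall x y, `|A x y| <= M) -> 0 < row_norm U -> 0 < col_norm V ->
  d%:R * alpha ^+ 2 <=
    4 * (row_norm U * col_norm V + M ^+ 2) * (row_norm U * col_norm V + 1).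
Proof.
move=> alpha_gt0 AUV shA AM; set r := row_norm U; set c := col_norm V => r_gt0 c_gt0.
pose t := Num.sqrt (c / r).
have t2 : t ^+ 2 = c / r by rewrite sqr_sqrtr // divr_ge0 // ltW.
have t_neq0 : t != 0 by rewrite gt_eqF // sqrtr_gt0 divr_gt0.
have node_le s : (size s < d)%N ->
    dot (node_feature U xl wl t s) (node_feature U xl wl t s) <= r * c + M ^+ 2.
  move=> lt_sd; rewrite dot_node_feature; apply: lerD.
    have -> : r * c = t ^+ 2 * r ^+ 2 by rewrite t2; field; rewrite gt_eqF.
    by rewrite ler_wpM2l ?sqr_ge0 ?dot_row_le.
  have w_le : `|wl s| <= M by have := shatters_threshold shA AM lt_sd; lra.
  rewrite -(real_normK (num_real (wl s))).
  by apply: lerXn2r; rewrite ?nnegrE // (le_trans _ w_le).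
have col_le y : dot (col_feature V t y) (col_feature V t y) <= r * c + 1.
  have -> : r * c = t ^- 2 * c ^+ 2 by rewrite t2; field; rewrite !gt_eqF.
  by rewrite dot_col_feature lerD2r ler_wpM2l ?invr_ge0 ?sqr_ge0 ?dot_col_le.
pose b := greedy_path (node_feature U xl wl t) d.
have size_b : size b == d by rewrite size_greedy_path.
have [y margin] := shatters_margin shA (Tuple size_b).
have M_ge0 : 0 <= M := le_trans (normr_ge0 _) (AM (xl [::]) y).
have half_ge0 : 0 <= alpha / 2 by rewrite divr_ge0 ?ltW.
have B_ge0 : 0 <= r * c + M ^+ 2 by rewrite addr_ge0 ?sqr_ge0 ?mulr_ge0 ?ltW.
have margin' (j : 'I_d) : alpha / 2 <= bit_sign (nth false b j) *
    dot (node_feature U xl wl t (take j b)) (col_feature V t y).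
  by rewrite (dot_node_col_feature xl wl _ _ AUV t_neq0) -(tnth_nth _ (Tuple size_b)).
have := greedy_path_margin_le half_ge0 B_ge0 node_le (col_le y) margin'.
by rewrite expr_div_n; lra.
Qed.

Lemma factorization_lower_bound (R : realType) (X Y : finType) (A : X -> Y -> R)
    (alpha : R) d k (U : X -> 'I_k -> R) V (M : R) :
  0 < alpha -> shattered_at_depth A alpha d -> factorizes A U V ->
  (forall x y, `|A x y| <= M) ->
  alpha * Num.sqrt d%:R / (2 * (M + 1)) - 1 <= row_norm U * col_norm V.
Proof.
move=> alpha_gt0 [xl [wl shA]] AUV AM.
have r_ge0 := row_norm_ge0 U; have c_ge0 := col_norm_ge0 V.
set r := row_norm U in r_ge0 *; set c := col_norm V in c_ge0 *.
have g_ge0 : 0 <= r * c by rewrite mulr_ge0.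
have [->|d_gt0] := posnP d; first by rewrite sqrtr0 mulr0 mul0r sub0r (le_trans _ g_ge0) ?lerN10.
have root_gt0 (B : R) : (forall x y, `|A x y| <= B) -> 0 < B.
  move=> AB; have := shatters_threshold (s := [::]) shA AB d_gt0.
  by have := normr_ge0 (wl [::]); lra.
have M_gt0 := root_gt0 _ AM.
have g_gt0 : 0 < r * c := root_gt0 _ (fun x y => factorizes_abs_le x y AUV).
have r_gt0 : 0 < r by rewrite lt_def r_ge0 andbT; apply: contraTneq g_gt0 => ->; rewrite mul0r ltxx.
have c_gt0 : 0 < c by rewrite lt_def c_ge0 andbT; apply: contraTneq g_gt0 => ->; rewrite mulr0 ltxx.
have depth_le := shattered_depth_le alpha_gt0 AUV shA AM r_gt0 c_gt0.
rewrite lerBlDr ler_pdivrMr ?mulr_gt0 ?addr_gt0 //.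
rewrite -ler_sqr ?nnegrE ?mulr_ge0 ?sqrtr_ge0 ?addr_ge0 ?(ltW M_gt0) ?(ltW alpha_gt0) //.
rewrite exprMn sqr_sqrtr ?ler0n // mulrC.
apply: (le_trans depth_le); have M_ge0 := ltW M_gt0.
have -> : ((r * c + 1) * (2 * (M + 1))) ^+ 2 = 4 * (r * c + M ^+ 2) * (r * c + 1)
    + 4 * (r * c + 1) * (r * c * (M ^+ 2 + 2 * M) + 2 * M + 1) by ring.
by rewrite lerDl; apply: mulr_ge0; nra.
Qed.

Lemma depth_le_of_gamma_bound (R : rcfType) (alpha g M : R) (d : nat) :
  0 < alpha -> 0 <= M -> M <= g -> alpha * Num.sqrt d%:R / (2 * (M + 1)) - 1 <= g ->
  d%:R <= 4 * (g + 1) ^+ 4 / alpha ^+ 2.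
Proof.
move=> alpha_gt0 M_ge0 M_le_g.
have M1_gt0 : 0 < 2 * (M + 1) by lra.
rewrite lerBlDr ler_pdivrMr // => sqrt_le.
rewrite ler_pdivlMr ?exprn_gt0 // -[d%:R](sqr_sqrtr (ler0n R d)) -exprMn mulrC.
have -> : 4 * (g + 1) ^+ 4 = (2 * (g + 1) ^+ 2) ^+ 2 by ring.
have g1_ge0 : 0 <= g + 1 by lra.
rewrite ler_sqr ?nnegrE ?mulr_ge0 ?sqrtr_ge0 ?sqr_ge0 ?(ltW alpha_gt0) //.
by apply: (le_trans sqrt_le); nra.
Qed.

Theorem proposition3p2 (R : realType) (X Y : finType)
  (hX : (0 < #|X|)%N) (hY : (0 < #|Y|)%N)
  (alpha : R) (halpha : 0 < alpha) (A : X -> Y -> R)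
  (d : nat) (gamma M : R)
  (hd : Ldim_is A alpha d) (hg : gamma2 A = gamma) (hM : max_abs A = M) :
  alpha * Num.sqrt d%:R / (2 * (M + 1)) - 1 <= gamma /\
  d%:R <= 4 * (gamma + 1) ^+ 4 / alpha ^+ 2.
Proof.
have AM x y : `|A x y| <= M by rewrite -hM abs_le_max_abs.
have M_ge0 : 0 <= M by rewrite -hM; apply: bigmax_ge_id.
have [M_le L_le] : M <= gamma /\ alpha * Num.sqrt d%:R / (2 * (M + 1)) - 1 <= gamma.
  have factorizations_ne : exists p, exists k (U : X -> 'I_k -> R) (V : 'I_k -> Y -> R),
      factorizes A U V /\ p = row_norm U * col_norm V.
    by eexists; exists #|Y|; do 2 eexists; split; first exact: factorizes_trivial.
  rewrite -hg; split; apply: lb_le_inf => //.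
  - by move=> _ [k [U [V [AUV ->]]]]; rewrite -hM max_abs_le_factorization.
  - by move=> _ [k [U [V [AUV ->]]]]; apply: factorization_lower_bound hd.1 AUV AM.
split=> //; exact: depth_le_of_gamma_bound halpha M_ge0 M_le L_le.
Qed.
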